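(* Let $\mathcal{T}$ be the set of integer triples $(A,B,C)$ with $A\le B\le C$, $A+B+C>0$, $\gcd(A,B,C)=1$ and $AB+BC+CA=q^2$ for some integer $q\ge 0$. Define $T:\mathcal{T}\to\mathbb{Z}^3$ by $T(A,B,C)=\mathrm{sort}(-A,\,B+2A,\,C+2A)$ if $A<0$, and $T(A,B,C)=\mathrm{sort}(A,\,B,\,A+B+C-2\sqrt{AB+BC+CA})$ if $A\ge 0$, where $\mathrm{sort}$ arranges the entries in non-decreasing order. Then $T$ maps $\mathcal{T}$ into $\mathcal{T}$, $T(0,0,1)=(0,0,1)$, and $A'+B'+C'<A+B+C$ for $(A',B',C')=T(A,B,C)$ whenever $(A,B,C)\ne(0,0,1)$. Consequently, for every $(A,B,C)\in\mathcal{T}$ some iterate $T^k(A,B,C)$ equals $(0,0,1)$. *)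

From Stdlib Require Import ZArith Lia.
Open Scope Z_scope.

Definition triple := (Z * Z * Z)%type.

Definition sort3 (a b c : Z) : triple :=
  let lo := Z.min a (Z.min b c) in
  let hi := Z.max a (Z.max b c) in
  (lo, a + b + c - lo - hi, hi).

Definition inT (t : triple) : Prop :=
  let '(A, B, C) := t in
  A <= B /\ B <= C /\ A + B + C > 0 /\ Z.gcd (Z.gcd A B) C = 1 /\
  exists q : Z, 0 <= q /\ A * B + B * C + C * A = q ^ 2.

(* the map T; on 𝒯, AB+BC+CA is a perfect square, so Z.sqrt is its exact
   nonnegative square root *)
Definition Tmap (t : triple) : triple :=
  let '(A, B, C) := t in
  if A <? 0 then sort3 (- A) (B + 2 * A) (C + 2 * A)
  else sort3 A B (A + B + C - 2 * Z.sqrt (A * B + B * C + C * A)).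

Definition tsum (t : triple) : Z := let '(A, B, C) := t in A + B + C.

From Stdlib Require Import ZArith Lia Wf_nat.
Open Scope Z_scope.

(* Write e2(a,b,c) = ab + bc + ca.  Both branches of T preserve e2 up to a
   square: the reflection (A,B,C) ↦ (-A, B+2A, C+2A) used when A < 0 keeps e2
   unchanged, and the flip C ↦ C' = A+B+C-2q used when A >= 0 (with
   e2 = q^2) turns e2 into (q-A-B)^2.  Both preserve the gcd condition, and
   elementary inequalities show the new sum stays positive and, off (0,0,1),
   strictly drops: by 2A in the first branch, by 2q-(A+B) in the second. *)

Definition coprime3 (a b c : Z) : Prop :=
  forall d : Z, (d | a) -> (d | b) -> (d | c) -> (d | 1).

Lemma gcd3_eq_1_iff (a b c : Z) : Z.gcd (Z.gcd a b) c = 1 <-> coprime3 a b c.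
Proof.
  split.
  - intros Hg d Ha Hb Hc. rewrite <- Hg.
    apply Z.gcd_greatest; [apply Z.gcd_greatest|]; assumption.
  - intro H. apply Z.divide_1_r_nonneg; [apply Z.gcd_nonneg|]. apply H.
    + eapply Z.divide_trans; [apply Z.gcd_divide_l | apply Z.gcd_divide_l].
    + eapply Z.divide_trans; [apply Z.gcd_divide_l | apply Z.gcd_divide_r].
    + apply Z.gcd_divide_r.
Qed.

Definition admissible (a b c : Z) : Prop :=
  a + b + c > 0 /\ Z.gcd (Z.gcd a b) c = 1 /\
  exists q : Z, 0 <= q /\ a * b + b * c + c * a = q ^ 2.

Lemma admissible_swap12 (a b c : Z) : admissible a b c -> admissible b a c.
Proof.
  intros (Hs & Hg & q & Hq & He). rewrite gcd3_eq_1_iff in Hg.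
  split; [lia | split].
  - apply gcd3_eq_1_iff. intros d Hb Ha Hc. now apply Hg.
  - exists q. split; [assumption | rewrite <- He; ring].
Qed.

Lemma admissible_swap23 (a b c : Z) : admissible a b c -> admissible a c b.
Proof.
  intros (Hs & Hg & q & Hq & He). rewrite gcd3_eq_1_iff in Hg.
  split; [lia | split].
  - apply gcd3_eq_1_iff. intros d Ha Hc Hb. now apply Hg.
  - exists q. split; [assumption | rewrite <- He; ring].
Qed.

Lemma sort3_symmetric (P : Z -> Z -> Z -> Prop)
    (swap12 : forall a b c, P a b c -> P b a c)
    (swap23 : forall a b c, P a b c -> P a c b) (a b c : Z) :
  P a b c -> let '(x, y, z) := sort3 a b c in x <= y /\ y <= z /\ P x y z.
Proof.
  intro H. unfold sort3.
  destruct (Z.le_gt_cases a b), (Z.le_gt_cases b c), (Z.le_gt_cases a c).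
  all: try (exfalso; lia).
  all: first [ replace (Z.min a (Z.min b c)) with a by lia
             | replace (Z.min a (Z.min b c)) with b by lia
             | replace (Z.min a (Z.min b c)) with c by lia ].
  all: first [ replace (Z.max a (Z.max b c)) with a by lia
             | replace (Z.max a (Z.max b c)) with b by lia
             | replace (Z.max a (Z.max b c)) with c by lia ].
  all: match goal with |- _ /\ _ /\ _ _ ?m _ =>
         first [ replace m with a by lia | replace m with b by lia
               | replace m with c by lia ] end.
  all: split; [lia | split; [lia | auto]].
Qed.

Lemma inT_sort3 (a b c : Z) : admissible a b c -> inT (sort3 a b c).
Proof.
  intro H.
  pose proof (sort3_symmetric admissible admissible_swap12 admissible_swap23 a b c H)
    as Hs.
  destruct (sort3 a b c) as [[x y] z]. exact Hs.
Qed.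

Lemma tsum_sort3 (a b c : Z) : tsum (sort3 a b c) = a + b + c.
Proof. unfold sort3, tsum. lia. Qed.

Lemma inT_two_zeros (C : Z) : inT (0, 0, C) -> C = 1.
Proof.
  intros (_ & _ & Hs & Hg & _). change (Z.gcd 0 0) with 0 in Hg.
  rewrite Z.gcd_0_l, Z.abs_eq in Hg; lia.
Qed.

Section Reflection.

Variables A B C : Z.
Hypothesis A_neg : A < 0.
Hypotheses (AB : A <= B) (BC : B <= C).

(* B > 0, for otherwise C > -(A+B) > 0 and e2 = AB + (A+B)C < -(A^2+AB+B^2) < 0.
   Then e2 >= 0 gives -A(B+C) <= BC <= (B+C)^2/4, so 3(-A) < B+C. *)
Lemma reflection_sum_pos :
  A + B + C > 0 -> 0 <= A * B + B * C + C * A -> 0 < - A + (B + 2 * A) + (C + 2 * A).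
Proof.
  intros Hs He.
  assert (B_pos : 0 < B).
  { destruct (Z.le_gt_cases B 0) as [B_nonpos | B_pos]; [exfalso | exact B_pos].
    assert ((A + B) * C < - (A + B) ^ 2) by nia. nia. }
  assert (AM_GM : 4 * (B * C) <= (B + C) ^ 2) by nia.
  assert (Hbound : - A * (B + C) <= B * C) by lia.
  nia.
Qed.

Lemma reflection_e2 :
  (- A) * (B + 2 * A) + (B + 2 * A) * (C + 2 * A) + (C + 2 * A) * (- A)
  = A * B + B * C + C * A.
Proof. ring. Qed.

Lemma reflection_coprime :
  coprime3 A B C -> coprime3 (- A) (B + 2 * A) (C + 2 * A).
Proof.
  intros Hg d Ha Hb Hc. rewrite Z.divide_opp_r in Ha. apply Hg; [assumption | |].
  - replace B with (B + 2 * A - 2 * A) by ring.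
    apply Z.divide_sub_r; [assumption | now apply Z.divide_mul_r].
  - replace C with (C + 2 * A - 2 * A) by ring.
    apply Z.divide_sub_r; [assumption | now apply Z.divide_mul_r].
Qed.

Lemma reflection_admissible :
  admissible A B C -> admissible (- A) (B + 2 * A) (C + 2 * A).
Proof.
  intros (Hs & Hg & q & Hq & He). split; [|split].
  - apply Z.lt_gt, reflection_sum_pos; [assumption | rewrite He; nia].
  - apply gcd3_eq_1_iff, reflection_coprime, gcd3_eq_1_iff, Hg.
  - exists q. split; [assumption | now rewrite reflection_e2].
Qed.

End Reflection.

Section Flip.

Variables A B C q : Z.
Hypotheses (A_nonneg : 0 <= A) (AB : A <= B) (BC : B <= C) (q_nonneg : 0 <= q).
Hypothesis e2_square : A * B + B * C + C * A = q ^ 2.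

Let C' := A + B + C - 2 * q.

Lemma flip_e2 : A * B + B * C' + C' * A = (q - (A + B)) ^ 2.
Proof.
  unfold C'.
  transitivity ((q - (A + B)) ^ 2 + (A * B + B * C + C * A - q ^ 2)); [ring|].
  rewrite e2_square. ring.
Qed.

(* 4q^2 = 4AB + 4(A+B)C < (2A+2B+C)^2 unless A = B = C = 0. *)
Lemma flip_sum_pos : A + B + C > 0 -> A + B + C' > 0.
Proof.
  intro Hs. unfold C'.
  assert (H2q : 2 * q < 2 * A + 2 * B + C); [|lia].
  apply Z.square_lt_simpl_nonneg; [lia|].
  assert (4 * A * B <= (A + B) ^ 2) by nia.
  destruct (Z.eq_dec (A + B) 0); nia.
Qed.

(* A common divisor d of A, B, C' divides q^2 = AB + (A+B)C and C - 2q,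
   hence C^2 = (C-2q)(C+2q) + 4q^2; being coprime to C (it divides A and
   B), d divides C. *)
Lemma flip_coprime : coprime3 A B C -> coprime3 A B C'.
Proof.
  unfold C'. intros Hg d Ha Hb Hc'.
  assert (Hq2 : (d | q ^ 2)).
  { rewrite <- e2_square.
    apply Z.divide_add_r; [apply Z.divide_add_r|].
    - now apply Z.divide_mul_l.
    - now apply Z.divide_mul_l.
    - now apply Z.divide_mul_r. }
  assert (Hc2q : (d | C - 2 * q)).
  { replace (C - 2 * q) with (A + B + C - 2 * q - A - B) by ring.
    now apply Z.divide_sub_r; [apply Z.divide_sub_r|]. }
  assert (HCC : (d | C * C)).
  { replace (C * C) with ((C - 2 * q) * (C + 2 * q) + 4 * q ^ 2) by ring.
    apply Z.divide_add_r; [now apply Z.divide_mul_l | now apply Z.divide_mul_r]. }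
  assert (Hcop : Z.gcd d C = 1).
  { apply Z.divide_1_r_nonneg; [apply Z.gcd_nonneg|]. apply Hg.
    - eapply Z.divide_trans; [apply Z.gcd_divide_l | exact Ha].
    - eapply Z.divide_trans; [apply Z.gcd_divide_l | exact Hb].
    - apply Z.gcd_divide_r. }
  apply Hg; [assumption | assumption | eapply Z.gauss; eassumption].
Qed.

Lemma flip_admissible : admissible A B C -> admissible A B C'.
Proof.
  intros (Hs & Hg & _). split; [|split].
  - now apply flip_sum_pos.
  - apply gcd3_eq_1_iff, flip_coprime, gcd3_eq_1_iff, Hg.
  - exists (Z.abs (q - (A + B))). split; [lia|].
    rewrite flip_e2. destruct (Z.abs_spec (q - (A + B))) as [[_ ->] | [_ ->]]; ring.
Qed.

(* The sum drops iff A + B < 2q, i.e. (A-B)^2 < 4(A+B)C, which holds as soon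
   as B > 0 since then (B-A)^2 <= B^2 < 4B(A+B) <= 4(A+B)C. *)
Lemma flip_decreases : 0 < B -> A + B + C' < A + B + C.
Proof.
  intro B_pos. unfold C'.
  assert (HAB : A + B < 2 * q); [|lia].
  apply Z.square_lt_simpl_nonneg; [lia|]. nia.
Qed.

End Flip.

Lemma Tmap_step (t : triple) :
  inT t -> inT (Tmap t) /\ (t <> (0, 0, 1) -> tsum (Tmap t) < tsum t).
Proof.
  destruct t as [[A B] C]. intros Ht.
  destruct Ht as (AB & BC & Hadm). pose proof Hadm as (_ & _ & q & Hq & He).
  unfold Tmap. change (tsum (A, B, C)) with (A + B + C).
  destruct (Z.ltb_spec A 0) as [A_neg | A_nonneg].
  - split; [now apply inT_sort3, reflection_admissible|].
    intros _. rewrite tsum_sort3. lia.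
  - assert (Hsqrt : Z.sqrt (q ^ 2) = q).
    { replace (q ^ 2) with (q * q) by ring. now apply Z.sqrt_square. }
    rewrite He, Hsqrt.
    split; [now apply inT_sort3, flip_admissible|].
    intros Hne. rewrite tsum_sort3.
    destruct (Z.eq_dec B 0) as [B0 | B_pos].
    + assert (A = 0) by lia. subst A B.
      exfalso. apply Hne. f_equal. exact (inT_two_zeros C (conj AB (conj BC Hadm))).
    + apply flip_decreases; lia.
Qed.

Lemma iterate_reaches {X : Type} (f : X -> X) (I : X -> Prop) (m : X -> Z) (x0 : X)
    (eq_dec : forall x y : X, {x = y} + {x <> y})
    (f_inv : forall x, I x -> I (f x))
    (m_nonneg : forall x, I x -> 0 <= m x)
    (m_decr : forall x, I x -> x <> x0 -> m (f x) < m x) :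
  forall x, I x -> exists k : nat, Nat.iter k f x = x0.
Proof.
  intro x.
  induction x as [x IH]
    using (well_founded_induction (well_founded_ltof X (fun x => Z.to_nat (m x)))).
  intro Hx. destruct (eq_dec x x0) as [-> | Hne].
  - now exists 0%nat.
  - destruct (IH (f x)) as [k Hk]; [| now apply f_inv |].
    + unfold ltof. pose proof (m_nonneg _ (f_inv _ Hx)).
      pose proof (m_decr _ Hx Hne). lia.
    + exists (S k). now rewrite Nat.iter_succ_r.
Qed.

Lemma triple_eq_dec (s t : triple) : {s = t} + {s <> t}.
Proof. repeat decide equality; apply Z.eq_dec. Qed.

Theorem mainTheorem7 :
  (forall t : triple, inT t -> inT (Tmap t)) /\
  Tmap (0, 0, 1) = (0, 0, 1) /\
  (forall t : triple, inT t -> t <> (0, 0, 1) -> tsum (Tmap t) < tsum t) /\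
  (forall t : triple, inT t -> exists k : nat, Nat.iter k Tmap t = (0, 0, 1)).
Proof.
  assert (T_inv : forall t, inT t -> inT (Tmap t)) by (intros t Ht; apply Tmap_step, Ht).
  assert (T_decr : forall t, inT t -> t <> (0, 0, 1) -> tsum (Tmap t) < tsum t)
    by (intros t Ht; apply Tmap_step, Ht).
  split; [exact T_inv | split; [reflexivity | split; [exact T_decr |]]].
  apply (iterate_reaches Tmap inT tsum (0, 0, 1) triple_eq_dec T_inv); [|exact T_decr].
  intros [[A B] C] (_ & _ & Hs & _). simpl. lia.
Qed.
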